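(* Let $\mathbf A$ be a Mal'cev algebra, $n\ge1$, $\alpha_0,\dots,\alpha_{n-1}$ congruences of $\mathbf A$, and $a,b\in A$. The following are equivalent: (1) $(a,b)\in\psi_{2^n-1}(\Delta(\alpha_0,\dots,\alpha_{n-1}))$; (2) the $2^n$-tuple $(a,\dots,a,b)$ (all coordinates $a$ except the last, which is $b$) belongs to $\Delta(\alpha_0,\dots,\alpha_{n-1})$; (3) there exist $c_0,\dots,c_{2^{n-1}-2}\in A$ such that $(c_0,\dots,c_{2^{n-1}-2},a,c_0,\dots,c_{2^{n-1}-2},b)\in\Delta(\alpha_0,\dots,\alpha_{n-1})$; (4) $(a,b)\in[\alpha_0,\dots,\alpha_{n-1}]$.
   Context: A Mal'cev algebra is an algebra with a ternary term operation $q$ satisfying $q(x,x,y)=y=q(y,x,x)$. Higher commutator (Bulatov): for congruences $\alpha_0,\dots,\alpha_{n-1},\gamma$, say $\alpha_0,\dots,\alpha_{n-2}$ centralize $\alpha_{n-1}$ modulo $\gamma$ if for all tuples $\mathbf a_i,\mathbf b_i$ ($i<n$, with $\mathbf a_i\neq\mathbf b_i$ congruent modulo $\alpha_i$ coordinatewise) and every term operation $t$ such that $t(\mathbf x_0,\dots,\mathbf x_{n-2},\mathbf a_{n-1})\equiv_\gamma t(\mathbf x_0,\dots,\mathbf x_{n-2},\mathbf b_{n-1})$ for all $(\mathbf x_0,\dots,\mathbf x_{n-2})\in(\{\mathbf a_0,\mathbf b_0\}\times\dots\times\{\mathbf a_{n-2},\mathbf b_{n-2}\})\setminus\{(\mathbf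 b_0,\dots,\mathbf b_{n-2})\}$, we have $t(\mathbf b_0,\dots,\mathbf b_{n-2},\mathbf a_{n-1})\equiv_\gamma t(\mathbf b_0,\dots,\mathbf b_{n-2},\mathbf b_{n-1})$. $[\alpha_0,\dots,\alpha_{n-1}]$ is the smallest congruence $\gamma$ such that $\alpha_0,\dots,\alpha_{n-2}$ centralize $\alpha_{n-1}$ modulo $\gamma$. Tuples in $A^m$ are indexed by $0,\dots,m-1$; $k_{(i)}$ is the $i$-th binary digit of $k$ (least significant is $i=0$). For $a,b\in A$ and $i<n$, $\mathbf c_i^n(a,b)\in A^{2^n}$ has $k$-th coordinate $a$ if $k_{(i)}=0$ and $b$ if $k_{(i)}=1$. $\Delta(\alpha_0,\dots,\alpha_{n-1})$ is the subuniverse of $\mathbf A^{2^n}$ generated by $\{\mathbf c_i^n(a,b): i<n,\ (a,b)\in\alpha_i\}$. Forks: for $R\subseteq A^m$ and $i<m$, $\psi_i(R)$ is the set of pairs $(a,b)$ for which there exist $\mathbf c,\mathbf d\in R$ with $c_i=a$, $d_i=b$, and $c_k=d_k$ for all $k\neq i$. *)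

From mathcomp Require Import all_boot.
Set Implicit Arguments. Unset Strict Implicit. Unset Printing Implicit Defensive.

(* An algebra: carrier, operation symbols (arbitrary signature), arities,
   and basic operations (arguments given as finite functions, hence
   extensional). *)
Record algebra := Algebra {
  carrier :> Type;
  sym : Type;
  arity : sym -> nat;
  op : forall s : sym, {ffun 'I_(arity s) -> carrier} -> carrier
}.

Section UA.
Variable A : algebra.

Inductive term_op (V : Type) : ((V -> A) -> A) -> Prop :=
| term_proj (v : V) : term_op (fun e => e v)
| term_comp (s : sym A) (g : 'I_(arity s) -> (V -> A) -> A) :
    (forall j, term_op (g j)) ->
    term_op (fun e => op [ffun j => g j e]).

Definition trip (x y z : A) : 'I_3 -> A :=
  fun j => match val j with 0 => x | 1 => y | _ => z end.

Definition malcev : Prop :=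
  exists q : ('I_3 -> A) -> A, term_op q /\
    forall x y : A, q (trip x x y) = y /\ q (trip y x x) = y.

Definition congruence (R : A -> A -> Prop) : Prop :=
  [/\ (forall x, R x x), (forall x y, R x y -> R y x),
      (forall x y z, R x y -> R y z -> R x z) &
      (forall (s : sym A) (x y : {ffun 'I_(arity s) -> A}),
          (forall j, R (x j) (y j)) -> R (op x) (op y))].

(* Bulatov's centrality: alpha_0..alpha_{n-2} centralize alpha_{n-1} mod gamma.
   Tuples a_i, b_i have length m i; the term t has variables
   {i : 'I_n & 'I_(m i)} (the i-th block is filled with x_i).
   For a choice s of a/b on the first n-1 blocks and e on the last block,
   [choose s e i] is true iff block i receives b_i. *)
Definition choose (n : nat) (s : 'I_n -> bool) (e : bool) (i : 'I_n) : bool :=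
  if val i < n.-1 then s i else e.

Definition centralizes (n : nat) (alpha : 'I_n -> A -> A -> Prop)
  (gamma : A -> A -> Prop) : Prop :=
  forall (m : 'I_n -> nat) (a b : forall i : 'I_n, 'I_(m i) -> A)
         (t : ({i : 'I_n & 'I_(m i)} -> A) -> A),
    (forall i j, alpha i (a i j) (b i j)) ->
    (forall i, exists j, a i j <> b i j) ->
    term_op t ->
    let env (c : 'I_n -> bool) : {i : 'I_n & 'I_(m i)} -> A :=
      fun v => if c (tag v) then b (tag v) (tagged v) else a (tag v) (tagged v) in
    (forall s : 'I_n -> bool, (exists i : 'I_n, val i < n.-1 /\ s i = false) ->
       gamma (t (env (choose s false))) (t (env (choose s true)))) ->
    gamma (t (env (choose (fun _ => true) false)))
          (t (env (choose (fun _ => true) true))).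

Definition commutator (n : nat) (alpha : 'I_n -> A -> A -> Prop) (x y : A) : Prop :=
  forall gamma, congruence gamma -> centralizes alpha gamma -> gamma x y.

Inductive subalg_gen (m : nat) (X : ('I_m -> A) -> Prop) : ('I_m -> A) -> Prop :=
| sg_base (y : 'I_m -> A) : X y -> subalg_gen X y
| sg_op (s : sym A) (xs : 'I_(arity s) -> 'I_m -> A) (y : 'I_m -> A) :
    (forall j, subalg_gen X (xs j)) ->
    (forall k, y k = op [ffun j => xs j k]) -> subalg_gen X y.

Definition cvec (n i : nat) (x y : A) : 'I_(2 ^ n) -> A :=
  fun k => if odd (val k %/ 2 ^ i) then y else x.

Definition Delta (n : nat) (alpha : 'I_n -> A -> A -> Prop) : ('I_(2 ^ n) -> A) -> Prop :=
  subalg_gen (fun y => exists (i : 'I_n) (x z : A),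
                 alpha i x z /\ forall k, y k = @cvec n i x z k).

Definition fork (m : nat) (R : ('I_m -> A) -> Prop) (i : nat) (x y : A) : Prop :=
  exists c d : 'I_m -> A, R c /\ R d /\
    forall k : 'I_m, if val k == i then c k = x /\ d k = y else c k = d k.

End UA.

From Pilot Require Import Defs.
From mathcomp Require Import all_boot zify.
From Stdlib Require Import Classical ClassicalEpsilon FunctionalExtensionality.
Set Implicit Arguments. Unset Strict Implicit. Unset Printing Implicit Defensive.

(* Let R = {(x, y) : (x, ..., x, y) in Delta}.  Delta contains the constant tuples
   and is closed under term operations and under reindexing by bitwise maps of the
   cube.  Applying the Mal'cev term coordinatewise, R is a congruence, a fork at the
   last coordinate can be straightened to (a, ..., a, b), and a tuple of Delta that
   is periodic in the top bit except at its last coordinate folds (through the map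
   forgetting the top bit) into a pair of R; this gives (1) <-> (2) <-> (3).
   R centralizes: the values of a term at the vertices of the cube form a tuple of
   Delta whose upper half the centrality premises let us overwrite by its lower
   half, one coordinate at a time, after which it folds.  Conversely, writing
   (a, ..., a, b) as a term applied to generators c_i(x, z) yields exactly the data
   of a centrality condition, so R lies in every centralizing congruence. *)

Definition bitn (i k : nat) : bool := odd (k %/ 2 ^ i).

Fixpoint nat_of_bits (m : nat) (f : nat -> bool) : nat :=
  if m is m'.+1 then f 0 + 2 * nat_of_bits m' (fun i => f i.+1) else 0.

Lemma bitn0 k : bitn 0 k = odd k.
Proof. by rewrite /bitn expn0 divn1. Qed.

Lemma bitnS i k : bitn i.+1 k = bitn i k./2.
Proof. by rewrite /bitn expnS divnMA divn2. Qed.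

Lemma bitn_small i k : k < 2 ^ i -> bitn i k = false.
Proof. by move=> lt_k; rewrite /bitn divn_small. Qed.

Lemma nat_of_bits_lt m f : nat_of_bits m f < 2 ^ m.
Proof.
elim: m f => [|m IHm] f //=; rewrite expnS.
by have := IHm (fun i => f i.+1); case: (f 0) => /=; lia.
Qed.

Lemma bitn_nat_of_bits m f i : i < m -> bitn i (nat_of_bits m f) = f i.
Proof.
elim: m f i => [|m IHm] f [|i] //= lt_im; last first.
  by rewrite bitnS -divn2 addnC mulnC divnMDl // divn_small ?addn0 ?IHm //; case: (f 0).
by rewrite bitn0 oddD oddM /= addbF oddb.
Qed.

Lemma eq_bitn m k k' : k < 2 ^ m -> k' < 2 ^ m ->
  (forall i, i < m -> bitn i k = bitn i k') -> k = k'.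
Proof.
elim: m k k' => [|m IHm] k k'; first by rewrite expn0; case: k; case: k'.
rewrite expnS => lt_k lt_k' eq_bits.
rewrite -(odd_double_half k) -(odd_double_half k') -!bitn0 eq_bits //.
congr (_ + _.*2); apply: IHm; try lia.
by move=> i lt_im; rewrite -!bitnS eq_bits.
Qed.

Lemma bitnMD i m q r : r < 2 ^ m ->
  bitn i (q * 2 ^ m + r) = if i < m then bitn i r else bitn (i - m) q.
Proof.
move=> lt_r; rewrite /bitn; case: ltnP => [lt_im | le_mi].
  have -> : 2 ^ m = 2 ^ (m - i) * 2 ^ i by rewrite -expnD subnK // ltnW.
  rewrite mulnA divnMDl ?expn_gt0 // oddD oddM oddX.
  by rewrite subn_eq0 leqNgt lt_im andbF.
have -> : 2 ^ i = 2 ^ m * 2 ^ (i - m) by rewrite -expnD subnKC.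
by rewrite divnMA divnMDl ?expn_gt0 // (divn_small lt_r) addn0.
Qed.

Lemma bitn_predX i m : bitn i (2 ^ m - 1) = (i < m).
Proof.
have pos_X k : 0 < 2 ^ k by rewrite expn_gt0.
case: (ltnP i m) => [lt_im | le_mi]; last first.
  by apply: bitn_small; have := leq_pexp2l (isT : 0 < 2) le_mi; have := pos_X m; lia.
have -> : 2 ^ m - 1 = (2 ^ (m - i) - 1) * 2 ^ i + (2 ^ i - 1).
  rewrite mulnBl mul1n -expnD subnK ?(ltnW lt_im) //.
  by have := leq_pexp2l (isT : 0 < 2) (ltnW lt_im); have := pos_X i; lia.
rewrite bitnMD ?ltnn ?subnn ?bitn0; last by have := pos_X i; lia.
by rewrite oddB ?expn_gt0 // oddX subn_eq0 leqNgt lt_im.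
Qed.

Lemma nat_of_bits_predX m f :
  nat_of_bits m f = 2 ^ m - 1 <-> (forall i, i < m -> f i).
Proof.
split=> [eq_pred i lt_im | all_f].
  by rewrite -(bitn_nat_of_bits f lt_im) eq_pred bitn_predX.
apply: (eq_bitn (m := m)); first exact: nat_of_bits_lt.
  by have := expn_gt0 2 m; lia.
by move=> i lt_im; rewrite bitn_nat_of_bits // bitn_predX lt_im all_f.
Qed.

Lemma exists_bitn_false m j : j < 2 ^ m - 1 -> exists2 i, i < m & bitn i j = false.
Proof.
move=> lt_j; case: (pickP (fun i : 'I_m => ~~ bitn i j)) => [i /negbTE bit_i | all_bits].
  by exists i.
suff eq_j : j = 2 ^ m - 1 by rewrite eq_j ltnn in lt_j.
apply: (eq_bitn (m := m)); try lia.
by move=> i lt_im; rewrite bitn_predX lt_im; have := all_bits (Ordinal lt_im) => /= /negbFE.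
Qed.

Lemma bitn_modX i p k : bitn i (k %% 2 ^ p) = (i < p) && bitn i k.
Proof.
have lt_mod : k %% 2 ^ p < 2 ^ p by rewrite ltn_pmod ?expn_gt0.
rewrite {2}(divn_eq k (2 ^ p)) bitnMD //; case: ltnP => // le_pi.
apply: bitn_small; apply: leq_trans lt_mod _; exact: leq_pexp2l.
Qed.

Lemma bitn_top i m j (e : bool) : i <= m -> j < 2 ^ m ->
  bitn i (e * 2 ^ m + j) = if i < m then bitn i j else e.
Proof.
move=> le_im lt_j; rewrite bitnMD //; case: ltnP => // le_mi.
by rewrite (_ : i - m = 0) ?bitn0 ?oddb //; lia.
Qed.

Lemma term_op_rename (A : algebra) (V W : Type) (f : W -> V) (t : (W -> A) -> A) :
  term_op t -> term_op (fun e : V -> A => t (fun w => e (f w))).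
Proof.
elim=> [w | s g _ IHg]; first exact: term_proj.
by apply: (term_comp (g := fun j e => g j (fun w => e (f w)))) => j; apply: IHg.
Qed.

Section Delta.
Variables (A : algebra) (n : nat) (alpha : 'I_n.+1 -> A -> A -> Prop).
Hypothesis alpha_cong : forall i, congruence (alpha i).

Local Notation D := (Delta alpha).
Local Notation N := (2 ^ n).
Local Notation L := (2 ^ n.+1 - 1).

Lemma alpha_refl i x : alpha i x x.
Proof. by case: (alpha_cong i). Qed.

Lemma alpha_sym i x y : alpha i x y -> alpha i y x.
Proof. by case: (alpha_cong i) => _ sym _ _; apply: sym. Qed.

Lemma Delta_ext y y' : D y -> y =1 y' -> D y'.
Proof. by move=> Dy /functional_extensionality <-. Qed.

Lemma Delta_term (V : Type) (t : (V -> A) -> A) (ys : V -> 'I_(2 ^ n.+1) -> A) :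
  term_op t -> (forall v, D (ys v)) -> D (fun k => t (fun v => ys v k)).
Proof.
move=> t_op; elim: t_op ys => [v | s g _ IHg] ys Dys; first exact: Dys.
by apply: (sg_op (xs := fun j k => g j (fun v => ys v k))) => // j; apply: IHg.
Qed.

Lemma Delta_const x : D (fun _ => x).
Proof.
apply: sg_base; exists ord0, x, x; split; first exact: alpha_refl.
by move=> k; rewrite /cvec; case: ifP.
Qed.

Definition ord_of_bits (f : nat -> bool) : 'I_(2 ^ n.+1) :=
  Ordinal (nat_of_bits_lt n.+1 f).

Lemma bitn_ord_of_bits f (i : 'I_n.+1) : bitn i (ord_of_bits f) = f i.
Proof. exact: bitn_nat_of_bits. Qed.

Lemma ord_of_bits_last f : (val (ord_of_bits f) == L) = [forall i : 'I_n.+1, f i].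
Proof.
apply/eqP/forallP => [/nat_of_bits_predX all_f i | all_f].
  exact: all_f.
by apply/nat_of_bits_predX => i lt_i; apply: (all_f (Ordinal lt_i)).
Qed.

(* Reindexing by a map of the cube {0,1}^(n+1) acting bitwise sends a generator
   c_i(x, z) to a generator c_i(x', z') with x', z' in {x, z}. *)
Lemma Delta_reindex (g : nat -> bool -> bool) y :
  D y -> D (fun k => y (ord_of_bits (fun i => g i (bitn i k)))).
Proof.
elim=> [y0 [i [x [z [xz y0E]]]] | s xs y0 _ IHxs y0E].
  apply: sg_base; exists i, (if g i false then z else x), (if g i true then z else x).
  split.
    case: (g i false); case: (g i true) => //; first [exact: alpha_refl | exact: alpha_sym].
  move=> k; rewrite y0E /cvec -/(bitn i _) bitn_ord_of_bits.
  by rewrite -/(bitn i k); case: (bitn i k).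
exact: (sg_op (xs := fun j k => xs j (ord_of_bits (fun i => g i (bitn i k))))).
Qed.

Lemma eq_ord_bitn (k j : 'I_(2 ^ n.+1)) :
  (k == j) = [forall i : 'I_n.+1, bitn i k == bitn i j].
Proof.
apply/eqP/forallP => [-> i // | eq_bits].
apply/val_inj/(eq_bitn (ltn_ord k) (ltn_ord j)) => i lt_i.
exact/eqP/(eq_bits (Ordinal lt_i)).
Qed.

Definition corner_rel (x y : A) : Prop := D (fun k => if val k == L then y else x).

Record term_rep := TermRep {
  rvar : finType;
  rblock : rvar -> 'I_n.+1;
  rlo : rvar -> A;
  rhi : rvar -> A;
  rterm : (rvar -> A) -> A }.
Arguments rterm : clear implicits.

(* The variable v of the term stands for the generator c_(rblock v)(rlo v, rhi v). *)
Definition represents (r : term_rep) (y : 'I_(2 ^ n.+1) -> A) : Prop :=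
  [/\ term_op (rterm r), forall v : rvar r, alpha (rblock v) (rlo v) (rhi v) &
      forall k, y k = rterm r (fun v => if bitn (rblock v) k then rhi v else rlo v)].

Lemma Delta_rep y : D y -> exists r, represents r y.
Proof.
elim=> [y0 [i [x [z [xz y0E]]]] | s xs y0 _ IHxs y0E].
  exists (TermRep (fun _ : unit => i) (fun _ => x) (fun _ => z) (fun e => e tt)).
  by split=> //; exact: term_proj.
pose r j := proj1_sig (constructive_indefinite_description _ (IHxs j)).
have rep_r j : represents (r j) (xs j) :=
  proj2_sig (constructive_indefinite_description _ (IHxs j)).
pose inj j (v : rvar (r j)) := Tagged (fun j => rvar (r j)) v.
pose t e := op [ffun j => rterm (r j) (fun v => e (inj j v))].
exists (TermRep (fun v => rblock (tagged v)) (fun v => rlo (tagged v))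
                (fun v => rhi (tagged v)) t).
split=> /=.
- apply: (term_comp (g := fun j e => rterm (r j) (fun v => e (inj j v)))) => j.
  by apply: term_op_rename; case: (rep_r j).
- by case=> j v; case: (rep_r j).
- move=> k; rewrite y0E; congr op; apply/ffunP => j; rewrite !ffunE.
  by case: (rep_r j) => _ _ ->.
Qed.

Lemma corner_rel_sub (gamma : A -> A -> Prop) :
  (forall x, gamma x x) -> centralizes alpha gamma ->
  forall a b, corner_rel a b -> gamma a b.
Proof.
move=> gamma_refl gamma_central a b /Delta_rep[r [t_op r_alpha rE]].
(* Every block gets a copy of all variables; in block i the variables v with
   rblock v = i carry their pair (rlo v, rhi v), the others the trivial pair (a, a). *)
pose m (i : 'I_n.+1) := #|rvar r|.
pose lo i (j : 'I_(m i)) := if rblock (enum_val j) == i then rlo (enum_val j) else a.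
pose hi i (j : 'I_(m i)) := if rblock (enum_val j) == i then rhi (enum_val j) else a.
pose t e := rterm r (fun v => e (existT (fun i => 'I_(m i)) (rblock v) (enum_rank v))).
pose env (c : 'I_n.+1 -> bool) (w : {i : 'I_n.+1 & 'I_(m i)}) :=
  if c (tag w) then hi (tag w) (tagged w) else lo (tag w) (tagged w).
have tE c : t (env c) = if [forall i, c i] then b else a.
  rewrite -(eq_forallb (fun i => congr1 c (inord_val i))).
  rewrite -(ord_of_bits_last (fun l => c (inord l))) rE.
  congr (rterm r _); apply: functional_extensionality => v.
  by rewrite /env /lo /hi enum_rankK eqxx bitn_ord_of_bits inord_val.
have lohi_alpha i j : alpha i (lo i j) (hi i j).
  by rewrite /lo /hi; case: eqP => [<- | _]; [exact: r_alpha | exact: alpha_refl].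
have tE_some c (i : 'I_n.+1) : c i = false -> t (env c) = a.
  by move=> ci; rewrite tE; case: forallP => // /(_ i); rewrite ci.
have tE_all (c : 'I_n.+1 -> bool) : (forall i, c i) -> t (env c) = b.
  by move=> all_c; rewrite tE; case: forallP.
(* Centrality only speaks about terms all of whose blocks contain a nontrivial
   pair; if block i0 has none, the tuple does not depend on bit i0 and a = b. *)
case: (classic (forall i, exists j, lo i j <> hi i j)) => [nontrivial | ].
  have := gamma_central m lo hi t lohi_alpha nontrivial (term_op_rename _ t_op).
  cbv zeta; rewrite -/env (tE_all (Defs.choose _ true)); last first.
    by move=> i; rewrite /Defs.choose; case: ifP.
  rewrite (tE_some _ ord_max) ?/Defs.choose ?ltnn //.
  apply=> s [i [lt_in si]].
  by rewrite !(tE_some _ i) ?/Defs.choose ?lt_in.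
move=> /not_all_ex_not[i0 /not_ex_all_not trivial_i0].
rewrite -(tE_some (fun i => i != i0) i0) ?eqxx // -(tE_all xpredT) //.
suff -> : env (fun i => i != i0) = env xpredT by apply: gamma_refl.
apply: functional_extensionality => -[i j]; rewrite /env /=.
case: eqP => [-> | _] //=; exact: NNPP (trivial_i0 j).
Qed.

Section Malcev.
Variable q : ('I_3 -> A) -> A.
Hypotheses (q_op : term_op q) (qxxy : forall x y, q (trip x x y) = y)
  (qyxx : forall x y, q (trip y x x) = y).

Lemma Delta_malcev x y z : D x -> D y -> D z -> D (fun k => q (trip (x k) (y k) (z k))).
Proof.
move=> Dx Dy Dz.
by apply: (Delta_term (ys := fun j k => trip (x k) (y k) (z k) j)) => // -[[|[|j]] ?].
Qed.

(* The bitwise map k |-> (bits where k agrees with j) sends only j to the last vertex. *)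
Lemma corner_rel_at x z (j : 'I_(2 ^ n.+1)) :
  corner_rel x z -> D (fun k => if k == j then z else x).
Proof.
move=> /(Delta_reindex (fun i b => b == bitn i j)) Dxz.
apply: (Delta_ext Dxz) => k; rewrite ord_of_bits_last eq_ord_bitn.
by congr (if _ then _ else _); apply: eq_forallb => i; rewrite inord_val.
Qed.

Lemma Delta_set y (j : 'I_(2 ^ n.+1)) x :
  D y -> corner_rel x (y j) -> D (fun k => if k == j then x else y k).
Proof.
move=> Dy /(corner_rel_at j) Dxy.
apply: (Delta_ext (Delta_malcev Dy Dxy (Delta_const x))) => k.
by case: eqP => [-> | _]; rewrite ?qxxy ?qyxx.
Qed.

(* q (f (N - 1), f (k mod N), f k) is f (N - 1) except at the last coordinate. *)
Lemma corner_rel_of_periodic (f : nat -> A) :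
  D (fun k => f k) -> (forall l, l < L -> f l = f (l %% N)) ->
  corner_rel (f (N - 1)) (f L).
Proof.
move=> Df f_per.
have pos_N : 0 < N by rewrite expn_gt0.
have lowE (k : 'I_(2 ^ n.+1)) : ord_of_bits (fun i => bitn i k && (i < n)) = k %% N :> nat.
  apply: (eq_bitn (nat_of_bits_lt _ _)).
    by apply: leq_trans (ltn_pmod _ pos_N) _; rewrite leq_pexp2l.
  by move=> i lt_i; rewrite bitn_nat_of_bits // bitn_modX andbC.
have Dlow := Delta_reindex (fun i b => b && (i < n)) Df.
apply: (Delta_ext (Delta_malcev (Delta_const (f (N - 1))) Dlow Df)) => k.
rewrite lowE; case: eqP => [-> | ne_kL].
  have -> : L = N + (N - 1) by rewrite expnS; lia.
  by rewrite modnDl modn_small ?qxxy //; lia.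
by rewrite -f_per ?qyxx //; have : (k : nat) <> L := ne_kL; have := ltn_ord k; lia.
Qed.

Lemma corner_rel_cube (y : nat -> A) :
  D (fun k => y k) -> (forall j, j < N - 1 -> corner_rel (y j) (y (N + j))) ->
  corner_rel (y (N - 1)) (y L).
Proof.
move=> Dy y_rel.
have pos_N : 0 < N by rewrite expn_gt0.
have XSn : 2 ^ n.+1 = 2 * N by rewrite expnS.
(* z j is y with its upper coordinates N, ..., N + j - 1 overwritten by the lower ones. *)
pose z j l := if N <= l < N + j then y (l - N) else y l.
have Dz j : j <= N - 1 -> D (fun k => z j k).
  elim: j => [_ | j IHj lt_j].
    by apply: (Delta_ext Dy) => k; rewrite /z addn0 ltnNge andbN.
  have lt_Nj : N + j < 2 ^ n.+1 by lia.
  have zj_rel : corner_rel (y j) (z j (N + j)) by rewrite /z ltnn andbF; apply: y_rel.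
  apply: (Delta_ext (Delta_set (j := Ordinal lt_Nj) (IHj (ltnW lt_j)) zj_rel)) => k.
  rewrite /z -val_eqE /=; case: eqP => [-> | ne_k].
    by rewrite addKn leq_addr addnS ltnS leqnn.
  by congr (if _ then _ else _); have : (k : nat) <> N + j := ne_k; lia.
have zE1 : z (N - 1) (N - 1) = y (N - 1) by rewrite /z (_ : N <= N - 1 = false) //; lia.
have zE2 : z (N - 1) L = y L by rewrite /z (_ : L < N + (N - 1) = false) ?andbF //; lia.
have := corner_rel_of_periodic (Dz _ (leqnn _)); rewrite zE1 zE2; apply=> l lt_l.
rewrite /z; case: (ltnP l N) => [lt_lN | le_Nl].
  by rewrite modn_small // [N <= l]leqNgt lt_lN.
have lt_lNN : l - N < N by lia.
have -> : l %% N = l - N by rewrite -{1}(subnKC le_Nl) modnDl modn_small.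
have lt_lNN1 : l < N + (N - 1) by lia.
by rewrite lt_lNN1 [N <= _]leqNgt lt_lNN.
Qed.

Lemma corner_rel_centralizes : centralizes alpha corner_rel.
Proof.
move=> m lo hi t lohi _ t_op; cbv zeta => hyp.
have pos_N : 0 < N by rewrite expn_gt0.
pose env (c : 'I_n.+1 -> bool) (w : {i : 'I_n.+1 & 'I_(m i)}) :=
  if c (tag w) then hi (tag w) (tagged w) else lo (tag w) (tagged w).
pose y l := t (env (fun i => bitn i l)).
have yE (e : bool) j :
    j < N -> t (env (Defs.choose (fun i => bitn i j) e)) = y (e * N + j).
  move=> lt_j; congr t; apply: functional_extensionality => w.
  by rewrite /env /Defs.choose bitn_top // -ltnS.
have Dy : D (fun k => y k).
  have gen_w (w : {i : 'I_n.+1 & 'I_(m i)}) :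
      D (cvec (tag w) (lo (tag w) (tagged w)) (hi (tag w) (tagged w))).
    by apply: sg_base; exists (tag w), (lo (tag w) (tagged w)), (hi (tag w) (tagged w)).
  exact: (Delta_ext (Delta_term t_op gen_w)).
have topE (e : bool) : t (env (Defs.choose (fun _ => true) e)) = y (e * N + (N - 1)).
  rewrite -yE; last by lia.
  congr (t (env _)); apply: functional_extensionality => i.
  by rewrite /Defs.choose bitn_predX; case: ifP.
rewrite !topE mul0n mul1n add0n (_ : N + (N - 1) = L); last by rewrite expnS; lia.
apply: corner_rel_cube Dy _ => j lt_j.
have [i lt_in bit_i] := exists_bitn_false lt_j.
have lt_jN : j < N by lia.
have := hyp (fun i => bitn i j); rewrite -/env !yE // mul0n add0n mul1n; apply.
have lt_iSn : i < n.+1 by rewrite ltnS ltnW.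
by exists (Ordinal lt_iSn).
Qed.

Lemma corner_rel_cong : congruence corner_rel.
Proof.
split.
- by move=> x; apply: (Delta_ext (Delta_const x)) => k; case: ifP.
- move=> x y Dxy; apply: (Delta_ext (Delta_malcev (Delta_const y) Dxy (Delta_const x))) => k.
  by case: ifP; rewrite ?qxxy ?qyxx.
- move=> x y z Dxy Dyz; apply: (Delta_ext (Delta_malcev Dxy (Delta_const y) Dyz)) => k.
  by case: ifP; rewrite ?qxxy ?qyxx.
- move=> s xs ys Dxys.
  apply: (sg_op (xs := fun j k => if val k == L then ys j else xs j)) => // k.
  by case: ifP => _; congr op; apply/ffunP => j; rewrite ffunE.
Qed.

Lemma fork_corner_rel a b : fork D L a b <-> corner_rel a b.
Proof.
split=> [[c [d [Dc [Dd cdE]]]] | Dab].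
  apply: (Delta_ext (Delta_malcev (Delta_const a) Dc Dd)) => k.
  by have := cdE k; case: eqP => _ => [[-> ->] | ->]; rewrite ?qxxy ?qyxx.
exists (fun _ => a), (fun k => if val k == L then b else a).
by split; [exact: Delta_const | split=> // k; case: eqP].
Qed.

Lemma corner_rel_halves a b : corner_rel a b <->
  exists c : nat -> A, D (fun k => if val k < N - 1 then c (val k)
                                   else if val k == N - 1 then a
                                   else if val k < 2 * N - 1 then c (val k - N)
                                   else b).
Proof.
have pos_N : 0 < N by rewrite expn_gt0.
have XSn : 2 ^ n.+1 = 2 * N by rewrite expnS.
split=> [Dab | [c Dc]].
  exists (fun _ => a); apply: (Delta_ext Dab) => k.
  have lt_k : val k < 2 ^ n.+1 := ltn_ord k.
  case: eqP => [-> | ne_kL]; first by rewrite ifF ?ifF //; lia.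
  by rewrite (_ : val k < 2 * N - 1); [case: ifP => //; case: ifP | lia].
pose f l := if l < N - 1 then c l else if l == N - 1 then a
            else if l < 2 * N - 1 then c (l - N) else b.
have [fN fL] : f (N - 1) = a /\ f L = b.
  by rewrite /f ltnn eqxx XSn ltnn ifF ?ifF //; lia.
rewrite -fN -fL; apply: (corner_rel_of_periodic Dc) => l lt_l.
case: (ltnP l N) => [lt_lN | le_Nl]; first by rewrite modn_small.
have [lt_lNN lt_l2N] : l - N < N - 1 /\ l < 2 * N - 1 by lia.
have -> : l %% N = l - N by rewrite -{1}(subnKC le_Nl) modnDl modn_small //; lia.
rewrite /f lt_lNN lt_l2N ifF //; last by apply/negbTE; rewrite -leqNgt; lia.
by rewrite ifF //; apply/negbTE/eqP; lia.
Qed.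
End Malcev.
End Delta.

Theorem mainTheorem7 (A : algebra) (n : nat) (alpha : 'I_n -> A -> A -> Prop)
  (a b : A) :
  malcev A -> 0 < n -> (forall i, congruence (alpha i)) ->
  let P1 := fork (Delta alpha) (2 ^ n - 1) a b in
  let P2 := Delta alpha (fun k => if val k == 2 ^ n - 1 then b else a) in
  let N := 2 ^ n.-1 in
  let P3 := exists c : nat -> A,
      Delta alpha (fun k => if val k < N - 1 then c (val k)
                            else if val k == N - 1 then a
                            else if val k < 2 * N - 1 then c (val k - N)
                            else b) in
  let P4 := commutator alpha a b in
  (P1 <-> P2) /\ (P2 <-> P3) /\ (P3 <-> P4).
Proof.
move=> [q [q_op qE]]; case: n alpha => [// | n] alpha _ alpha_cong; cbv zeta.
have qxxy x y : q (trip x x y) = y by case: (qE x y).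
have qyxx x y : q (trip y x x) = y by case: (qE x y).
have halves := corner_rel_halves alpha_cong q_op qxxy qyxx a b.
have corner_comm : corner_rel alpha a b <-> commutator alpha a b.
  split=> [ab gamma [gamma_refl _ _ _] gamma_central | ab].
    exact: (corner_rel_sub alpha_cong gamma_refl gamma_central ab).
  exact: (ab _ (corner_rel_cong alpha_cong q_op qxxy qyxx)
               (corner_rel_centralizes alpha_cong q_op qxxy qyxx)).
split; first exact: (fork_corner_rel alpha_cong q_op qxxy qyxx a b).
by split=> //; exact: (iff_trans (iff_sym halves) corner_comm).
Qed.
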